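(* Let $K,M\in\mathbb{N}$, $L>0$, and let $\mathbf{x}$ be a random vector with probability density $p\colon\mathbb{R}^K\to\mathbb{R}_+$ supported on $\mathcal{X}=[0,1]^K$ (i.e. $\Pr(\mathbf{x}\in\mathcal{X})=1$) which is $L$-Lipschitz on $\mathbb{R}^K$ with respect to the $\ell_1$-norm. Let $\tilde{\mathbf{x}}=\Delta_M(\mathbf{x})$ be the element-wise quantization with $\Delta_M(x)=\lfloor Mx\rfloor/M$, and let $\bar{\mathbf{x}}=\tilde{\mathbf{x}}+\mathbf{u}$ with $\mathbf{u}$ uniform on $[0,\frac1M]^K$ independent of $\mathbf{x}$; let $q$ be the density of $\bar{\mathbf{x}}$. Then $|p(\mathbf{x})-q(\mathbf{x})|\le\frac{LK}{2M}$ for every $\mathbf{x}\in\mathcal{X}$.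
   Context: Equivalently, $q$ is constant on each cell $\Delta_M^{-1}(\tilde{\mathbf{x}})$ and equals $M^K\int_{\Delta_M^{-1}(\tilde{\mathbf{x}})}p\,\mathrm{d}\lambda^K$ there. *)

From HB Require Import structures.
From mathcomp Require Import all_boot all_order all_algebra.
From mathcomp Require Import all_classical all_reals all_analysis.
Set Implicit Arguments. Unset Strict Implicit. Unset Printing Implicit Defensive.
Import Order.TTheory GRing.Theory Num.Theory.
Local Open Scope ring_scope.
Local Open Scope ereal_scope.

(* Lebesgue integral over R^K of a nonnegative function, as the iterated
   one-dimensional Lebesgue integral (Tonelli). *)
Fixpoint iint (R : realType) (k : nat) : ('rV[R]_k -> \bar R) -> \bar R :=
  match k with
  | 0 => fun f => f 0%R
  | k'.+1 => fun f =>
      \int[@lebesgue_measure R]_t iint (fun v : 'rV[R]_k' =>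
                                 f (row_mx (\row_(i < 1) t) v))
  end.

Local Close Scope ereal_scope.

Definition in_cube (R : realType) (K : nat) (x : 'rV[R]_K) : bool :=
  [forall i, (0 <= x 0 i <= 1)].

Definition l1dist (R : realType) (K : nat) (x y : 'rV[R]_K) : R :=
  \sum_(i < K) `|x 0 i - y 0 i|.

Definition quant (R : realType) (M : nat) (t : R) : R :=
  (Num.floor (M%:R * t))%:~R / M%:R.

Definition quantv (R : realType) (K M : nat) (x : 'rV[R]_K) : 'rV[R]_K :=
  \row_i quant M (x 0 i).

(* density of xbar = Delta_M(x) + u: constant on each cell
   Delta_M^{-1}(Delta_M x), equal to M^K * \int_{cell} p. *)
Definition qdens (R : realType) (K M : nat) (p : 'rV[R]_K -> R)
    (x : 'rV[R]_K) : R :=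
  (M%:R ^+ K) * fine (iint (fun y =>
     (p y * (if quantv M y == quantv M x then 1 else 0))%:E)).

From HB Require Import structures.
From mathcomp Require Import all_boot all_order all_algebra.
From mathcomp Require Import all_classical all_reals all_analysis.
From mathcomp Require Import ring lra.
(* Integrate one coordinate at a time.  On the cell of x, of side 1/M, the
   l1-Lipschitz bound gives |p y - p x| <= L * sum_i |y_i - x_i|, and the mean
   of |t - x_i| over an interval of length 1/M containing x_i is at most
   1/(2M).  Hence each coordinate moves the cell average M^K * \int_cell p
   away from p x by at most L/(2M), and the K coordinates by at most
   L K/(2M).  The one-dimensional mean is bounded through the chord of
   |t - x_i|, an affine function whose integral over the cell is exact. *)

Set Implicit Arguments.
Unset Strict Implicit.
Unset Printing Implicit Defensive.

Import Order.TTheory GRing.Theory Num.Theory.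
Import numFieldNormedType.Exports.
Local Open Scope ring_scope.

Section affine_integral.
Variable R : realType.

Lemma is_derive_affine (a b c t : R) :
  is_derive t 1 (fun s => a + b * (s - c)) b.
Proof.
by apply: is_derive_eq; rewrite add0r subr0 mul1r; exact: mulr1.
Qed.

Lemma continuous_affine (a b c : R) : continuous (fun s => a + b * (s - c)).
Proof.
move=> t; apply/differentiable_continuous/derivable1_diffP.
have df := is_derive_affine a b c t; exact: ex_derive.
Qed.

Lemma integral_affine_itv (m w a b : R) : 0 < w ->
  (\int[@lebesgue_measure R]_(t in `[(m - w)%R, (m + w)%R]) (a + b * (t - m))%:E
   = (a * (2 * w))%:E)%E.
Proof.
move=> w0; pose F t := a * t + b * (t - m) ^+ 2 / 2.
have dF (t : R) : is_derive t 1 F (a + b * (t - m)).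
  apply: is_derive_eq.
  by rewrite /= !(scaler0, subr0, addr0) /GRing.scale /=; field.
have dfF (t : R) : derivable F t 1 by exact: ex_derive.
have mw : m - w < m + w by rewrite ltrBlDr -addrA ltrDl addr_gt0.
rewrite (@continuous_FTC2 _ _ F _ _ mw).
- by rewrite -EFinN -EFinD /F; congr (_%:E); field.
- exact/continuous_subspaceT/continuous_affine.
- split=> [t _ //||].
  + by apply/cvg_at_right_filter/differentiable_continuous/derivable1_diffP.
  + by apply/cvg_at_left_filter/differentiable_continuous/derivable1_diffP.
- by move=> t _; rewrite derive1E derive_val.
Qed.

End affine_integral.

(* No measurability is assumed: the slices of an iterated integral [iint]
   are not known to be measurable. *)
Lemma le_integral_ge0_majorant d (T : measurableType d) (R : realType)
    (mu : {measure set T -> \bar R}) (f g : T -> \bar R) :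
  (forall x, 0 <= g x)%E -> (forall x, f x <= g x)%E ->
  (\int[mu]_x f x <= \int[mu]_x g x)%E.
Proof.
move=> g0 fg; apply: (@le_trans _ _ (\int[mu]_x f^\+ x)%E).
  by rewrite [leLHS]integralE -[leRHS]sube0 leeB // integral_ge0.
rewrite (ge0_integralTE mu (funepos_ge0 f)) (ge0_integralTE mu g0).
apply: ereal_sup_le => _ [h hf <-]; exists h => //= x.
by apply: le_trans (hf x) _; rewrite funeposE ge_max fg g0.
Qed.

(* The convex function |t - x0| lies below its chord over [m - w, m + w]. *)
Lemma abs_sub_le_chord (R : realFieldType) (m w t x0 : R) :
  0 < w -> `|t - m| <= w -> `|x0 - m| <= w ->
  `|t - x0| <= w + (m - x0) / w * (t - m).
Proof.
move=> w0; rewrite ler_norml => /andP[t1 t2]; rewrite ler_norml => /andP[x1 x2].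
have -> : w + (m - x0) / w * (t - m) = (w ^+ 2 - (x0 - m) * (t - m)) / w.
  by field; rewrite lt0r_neq0.
rewrite ler_pdivlMr // -[X in _ * X <= _](gtr0_norm w0) -normrM ler_norml.
by apply/andP; split; nra.
Qed.

Definition cell_mid (R : realType) (M : nat) (x : R) : R :=
  quant M x + (2 * M%:R)^-1.

Section quantization_cells.
Variables (R : realType) (M : nat).
Hypothesis M_gt0 : (0 < M)%N.

Let MR_gt0 : 0 < M%:R :> R. Proof. by rewrite ltr0n. Qed.

Lemma quant_eq_itv (t x0 : R) :
  (quant M t == quant M x0) = (quant M x0 <= t < quant M x0 + M%:R^-1).
Proof.
rewrite /quant (can_eq (divfK (lt0r_neq0 MR_gt0))) eqr_int floor_eq.
set n := Num.floor _.
have -> : n%:~R / M%:R + M%:R^-1 = (n + 1)%:~R / M%:R :> R.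
  by rewrite intrD mulrDl mul1r.
by rewrite ler_pdivrMr // ltr_pdivlMr // ![t * _]mulrC.
Qed.

Lemma cell_mid_dist (t x0 : R) :
  quant M t == quant M x0 -> `|t - cell_mid M x0| <= (2 * M%:R)^-1.
Proof.
have w2 : (2 * M%:R)^-1 *+ 2 = M%:R^-1 :> R.
  by rewrite mulr2n; field; rewrite lt0r_neq0.
rewrite quant_eq_itv ler_norml /cell_mid => /andP[lo hi].
by apply/andP; split; lra.
Qed.

Lemma integral_cell_affine (x0 a b : R) :
  (\int[@lebesgue_measure R]_t
     (if quant M t == quant M x0 then a + b * (t - cell_mid M x0) else 0)%:E
   = (a / M%:R)%:E)%E.
Proof.
set m := cell_mid M x0; set w := (2 * M%:R)^-1 : R.
have w0 : 0 < w by rewrite invr_gt0 mulr_gt0.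
have w2 : 2 * w = M%:R^-1 by rewrite /w invfM mulrA divff ?mul1r.
have -> : (fun t => (if quant M t == quant M x0 then a + b * (t - m) else 0)%:E)
    = (fun t => (a + b * (t - m))%:E) \_ `[m - w, m + w[.
  apply/funext => t; rewrite /patch mem_setE in_itv /= quant_eq_itv.
  have -> : quant M x0 = m - w by rewrite /m /cell_mid addrK.
  have -> : m - w + M%:R^-1 = m + w by rewrite -w2 mulr_natl mulr2n addrA subrK.
  by case: ifP.
rewrite -integral_mkcond integral_itv_bndo_bndc.
  by rewrite integral_affine_itv // w2.
apply/measurable_realfun.measurable_EFinP; apply: measurable_funTS.
apply: measurable_realfun.continuous_measurable_fun.
exact: continuous_affine.
Qed.

Lemma integral_cell_le (x0 a1 b1 a2 b2 : R) (h : R -> \bar R) :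
  (forall t, 0 <= h t)%E ->
  (forall t, quant M t != quant M x0 -> h t = 0%E) ->
  (forall t, quant M t == quant M x0 ->
     (a1 + b1 * (t - cell_mid M x0))%:E <= h t
     <= (a2 + b2 * (t - cell_mid M x0))%:E)%E ->
  ((a1 / M%:R)%:E <= \int[@lebesgue_measure R]_t h t <= (a2 / M%:R)%:E)%E.
Proof.
move=> h0 h_out h_in.
rewrite -(integral_cell_affine x0 a1 b1) -(integral_cell_affine x0 a2 b2).
apply/andP; split.
  apply: le_integral_ge0_majorant => // t.
  by case: ifPn => [/h_in/andP[-> _]|/h_out ->].
apply: le_integral_ge0_majorant => t;
  case: ifPn => [/h_in/andP[_ hi]|/h_out ht]; rewrite ?ht //.
exact: le_trans (h0 t) hi.
Qed.

End quantization_cells.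

Local Notation vcons t v := (row_mx (\row_(i < 1) t) v).

Section row_vectors.
Variable R : realType.

Lemma vconsP k (x : 'rV[R]_k.+1) : exists t v, x = vcons t v.
Proof.
exists (x 0 0), (rsubmx (x : 'rV_(1 + k))).
apply/rowP => j; rewrite mxE; case: splitP => j' jE; rewrite !mxE;
  congr (x _ _); apply: val_inj; rewrite /= jE ?(ord1 j') //.
Qed.

Lemma quantv_vcons_eq M k (t s : R) (v w : 'rV[R]_k) :
  (quantv M (vcons t v) == quantv M (vcons s w))
  = (quant M t == quant M s) && (quantv M v == quantv M w).
Proof.
have quantv_vcons (u : R) (z : 'rV[R]_k) :
    quantv M (vcons u z) = vcons (quant M u) (quantv M z).
  by apply/rowP => j; rewrite !mxE; case: splitP => j' _; rewrite !mxE.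
rewrite !quantv_vcons.
apply/eqP/andP => [/eq_row_mx[/rowP/(_ 0)]|[/eqP-> /eqP->]] //.
by rewrite !mxE => -> ->.
Qed.

Lemma l1dist_vcons k (t s : R) (v w : 'rV[R]_k) :
  l1dist (vcons t v) (vcons s w) = `|t - s| + l1dist v w.
Proof.
rewrite /l1dist (@big_split_ord _ _ _ 1 k) big_ord1 /= !row_mxEl !mxE.
by congr (_ + _); apply: eq_bigr => i _; rewrite !row_mxEr.
Qed.

Lemma l1dist_xx k (v : 'rV[R]_k) : l1dist v v = 0.
Proof. by rewrite /l1dist big1 // => i _; rewrite subrr normr0. Qed.

End row_vectors.

Lemma iint_ge0 (R : realType) k (f : 'rV[R]_k -> \bar R) :
  (forall y, 0 <= f y)%E -> (0 <= iint f)%E.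
Proof.
elim: k f => [|k IH] f f0 /=; first exact: f0.
by apply: integral_ge0 => t _; apply: IH.
Qed.

Lemma iint0 (R : realType) k : iint (fun _ : 'rV[R]_k => 0%E) = 0%E.
Proof.
elim: k => [|k IH] //=.
by rewrite (_ : (fun _ => _) = cst 0%E) ?integral0 //; apply/funext.
Qed.

Definition l1_lipschitz (R : realType) k (L : R) (f : 'rV[R]_k -> R) : Prop :=
  forall y z, `|f y - f z| <= L * l1dist y z.

Lemma l1_lipschitz_vcons (R : realType) k (L : R) (f : 'rV[R]_k.+1 -> R) t :
  l1_lipschitz L f -> l1_lipschitz L (fun v => f (vcons t v)).
Proof.
move=> fL y z; rewrite (le_trans (fL _ _)) //.
by rewrite l1dist_vcons subrr normr0 add0r.
Qed.

Definition cell_mass (R : realType) k M (f : 'rV[R]_k -> R) (x : 'rV[R]_k)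
    : \bar R :=
  iint (fun y => (f y * (if quantv M y == quantv M x then 1 else 0))%:E).

Section cell_mass.
Variables (R : realType) (M : nat).

Lemma cell_mass_ge0 k (f : 'rV[R]_k -> R) x :
  (forall y, 0 <= f y) -> (0 <= cell_mass M f x)%E.
Proof.
by move=> f0; apply: iint_ge0 => y; rewrite lee_fin mulr_ge0 //; case: ifP.
Qed.

Lemma cell_mass_vcons k (f : 'rV[R]_k.+1 -> R) x0 x' :
  cell_mass M f (vcons x0 x') =
  (\int[@lebesgue_measure R]_t
     (if quant M t == quant M x0 then cell_mass M (fun v => f (vcons t v)) x'
      else 0))%E.
Proof.
rewrite /cell_mass /=; congr (integral _ _ _); apply/funext => t.
case: ifPn => [cell|/negbTE off]; last rewrite -(iint0 R k);
  by congr iint; apply/funext => v; rewrite quantv_vcons_eq ?cell ?off ?mulr0.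
Qed.

Hypothesis M_gt0 : (0 < M)%N.
Variable L : R.
Hypothesis L_ge0 : 0 <= L.

Lemma cell_mass_bounds k (f : 'rV[R]_k -> R) (x : 'rV[R]_k) :
  (forall y, 0 <= f y) -> l1_lipschitz L f ->
  ((M%:R ^- k * (f x - L * k%:R / (2 * M%:R)))%:E <= cell_mass M f x
   <= (M%:R ^- k * (f x + L * k%:R / (2 * M%:R)))%:E)%E.
Proof.
elim: k f x => [|k IH] f x f0 fL.
  rewrite /cell_mass /= (thinmx0 x) eqxx expr0 invr1 mulr0 mul0r subr0 addr0.
  by rewrite !mul1r mulr1 lexx.
have [x0 [x' ->]] := vconsP x.
set fx := f (vcons x0 x'); set m := cell_mid M x0; set w := (2 * M%:R)^-1 : R.
set s := M%:R ^- k : R; set e := L * k%:R / (2 * M%:R).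
set g := L * ((m - x0) / w).
have Mn0 : M%:R != 0 :> R by rewrite pnatr_eq0 -lt0n.
have w0 : 0 < w by rewrite invr_gt0 mulr_gt0 // ltr0n.
have s0 : 0 <= s by rewrite invr_ge0 exprn_ge0 // ler0n.
have -> : M%:R ^- k.+1 * (fx - L * k.+1%:R / (2 * M%:R))
    = (s * (fx - e) - s * L * w) / M%:R.
  by rewrite /s /e /w exprSr -addn1 natrD; field; rewrite Mn0 expf_neq0.
have -> : M%:R ^- k.+1 * (fx + L * k.+1%:R / (2 * M%:R))
    = (s * (fx + e) + s * L * w) / M%:R.
  by rewrite /s /e /w exprSr -addn1 natrD; field; rewrite Mn0 expf_neq0.
(* By induction and the chord bound, the slice mass at [t] lies between two
   affine functions of [t], of slopes -(s * g) and s * g. *)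
rewrite cell_mass_vcons.
apply: (@integral_cell_le _ _ M_gt0 x0 _ (- (s * g)) _ (s * g)).
- by move=> t; case: ifP => // _; exact: cell_mass_ge0.
- by move=> t /negbTE ->.
move=> t cell; rewrite cell.
have /andP[lo hi] := IH _ x' (fun v => f0 _) (l1_lipschitz_vcons t fL).
move: lo hi; rewrite -/s -/e -/m => lo hi.
have : `|f (vcons t x') - fx| <= L * (w + (m - x0) / w * (t - m)).
  rewrite (le_trans (fL _ _)) // l1dist_vcons l1dist_xx addr0 ler_wpM2l //.
  by apply: abs_sub_le_chord; rewrite ?cell_mid_dist.
rewrite ler_norml => /andP[near_lo near_hi].
apply/andP; split; [apply: le_trans lo | apply: le_trans hi _]; rewrite lee_fin.
- have -> : s * (fx - e) - s * L * w + - (s * g) * (t - m)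
      = s * (fx - L * (w + (m - x0) / w * (t - m)) - e) by rewrite /g; ring.
  by rewrite ler_wpM2l //; lra.
- have -> : s * (fx + e) + s * L * w + s * g * (t - m)
      = s * (fx + L * (w + (m - x0) / w * (t - m)) + e) by rewrite /g; ring.
  by rewrite ler_wpM2l //; lra.
Qed.

End cell_mass.

Theorem lemma3 (R : realType) (K M : nat) (L : R) (p : 'rV[R]_K -> R) :
  (0 < M)%N -> 0 < L ->
  (forall x, 0 <= p x) ->
  iint (fun x => (p x)%:E) = 1%E ->
  iint (fun x => (p x * (if in_cube x then 0 else 1))%:E) = 0%E ->
  (forall x y, `|p x - p y| <= L * l1dist x y) ->
  forall x : 'rV[R]_K, in_cube x ->
    `|p x - qdens M p x| <= L * K%:R / (2 * M%:R).
Proof.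
move=> M_gt0 L_gt0 p_ge0 _ _ pL x _.
have /andP[lo hi] := cell_mass_bounds M_gt0 (ltW L_gt0) x p_ge0 pL.
move: lo hi; rewrite /qdens -/(cell_mass M p x).
case: (cell_mass M p x) => [c| |] //= lo hi; rewrite !lee_fin in lo hi.
have MK : 0 < M%:R ^+ K :> R by rewrite exprn_gt0 // ltr0n.
have MK_cancel (a : R) : M%:R ^+ K * (M%:R ^- K * a) = a.
  by rewrite mulrA mulfV ?mul1r // lt0r_neq0.
move: (ler_wpM2l (ltW MK) lo) (ler_wpM2l (ltW MK) hi); rewrite !MK_cancel.
by rewrite ler_norml => lo' hi'; apply/andP; split; lra.
Qed.
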